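(* Let $(\bm{A}_p,\mathcal{R}_p)$ be a Partial Double Description (PDD) of a polyhedral cone $\mathcal{P}\subseteq\mathbb{R}^d$ (in homogenized coordinates), and let $\bm{A}_q$ be the (exact) constraint matrix of a polyhedral cone $\mathcal{Q}=\{\bm{x}\in\mathbb{R}^d \mid \bm{A}_q\bm{x}\ge 0\}$. Let $(\bm{A}',\mathcal{R}'_p)$ be the output of the Batch Intersection procedure applied to $(\bm{A}_p,\mathcal{R}_p)$ and $\bm{A}_q$. Then $$\{\bm{x}\in\mathbb{R}^d \mid \bm{A}'\bm{x}\ge 0\}=\{\bm{x}\in\mathbb{R}^d \mid \bm{A}_p\bm{x}\ge 0 \wedge \bm{A}_q\bm{x}\ge 0\},$$ and $$\Big\{\sum_{\bm{r}_i\in\mathcal{R}'_p}\lambda_i\bm{r}_i \;\Big|\; \sum_i\lambda_i\le 1,\ \lambda_i\in\mathbb{R}^+_0\Big\}\subseteq\{\bm{x}\in\mathbb{R}^d \mid \bm{A}_p\bm{x}\ge 0 \wedge \bm{A}_q\bm{x}\ge 0\}.$$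
   Context: A polyhedral cone is described either by constraints ($\mathcal{H}$-representation) $\{\bm{x}\mid \bm{A}\bm{x}\ge 0\}$ (rows of $\bm{A}$ are constraints $\bm{a}$) or by a finite set of generating rays ($\mathcal{V}$-representation). A Partial Double Description (PDD) of a cone is a pair $(\bm{A},\mathcal{R})$ of a constraint matrix $\bm{A}$ and a finite set of rays $\mathcal{R}$ such that $\bm{a}\bm{r}\ge 0$ for every row $\bm{a}$ of $\bm{A}$ and every $\bm{r}\in\mathcal{R}$ (i.e., the rays under-approximate the cone defined by $\bm{A}$). A constraint $\bm{a}_j$ is active for a ray $\bm{r}_i$ if $\bm{a}_j\bm{r}_i=0$; the incidence matrix is $\mathcal{I}_{i,j}=1$ if $\bm{a}_j\bm{r}_i=0$ and $0$ otherwise, with $\mathcal{I}_i\subseteq\mathcal{I}_j$ iff $\mathcal{I}_{i,k}\le\mathcal{I}_{j,k}$ for all $k$. A PDD is A-irredundant if $\mathcal{I}_i\not\subseteq\mathcal{I}_j$ for all $i\ne j$; it is made A-irredundant by removing rays whose set of active constraints is a subset of (or equal to) that of another remaining ray until this holds. Batch Intersection, input a PDD $(\bm{A}_p,\mathcal{R}_p)$ and a constraint matrix $\bm{A}_q$: partition $\mathcal{R}_p$ into $\mathcal{R}_-=\{\bm{r}\mid \min(\bm{A}_q\bm{r})<0\}$, $\mathcal{R}_+=\{\bm{r}\mid \min(\bm{A}_q\bm{r})>0\}$ and $\mathcal{R}_0$ (the rest). For every pair $(\bm{r}_+,\bm{r}_-)\in\mathcal{R}_+\times\mathcal{R}_-$,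 compute by ray-shooting the point $\bm{r}_*$ on the segment from $\bm{r}_+$ to $\bm{r}_-$ where it first (as seen from $\bm{r}_+$) meets a hyperplane $\{\bm{x}\mid\tilde{\bm{a}}\bm{x}=0\}$ with $\tilde{\bm{a}}$ a row of $\bm{A}_q$; collect these in $\mathcal{R}_*$. Form the PDD $(\bm{A}_p\cup\bm{A}_q,\ \mathcal{R}_0\cup\mathcal{R}_+\cup\mathcal{R}_* )$, make it A-irredundant, and return it as $(\bm{A}',\mathcal{R}'_p)$. *)

From HB Require Import structures.
From mathcomp Require Import all_boot all_order all_algebra.
Set Implicit Arguments. Unset Strict Implicit. Unset Printing Implicit Defensive.
Import Order.TTheory GRing.Theory Num.Theory.
Local Open Scope ring_scope.

Section PDD.
Variables (R : realFieldType) (d : nat).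

Definition feasible m (A : 'M[R]_(m, d)) (x : 'cV[R]_d) : Prop :=
  forall i : 'I_m, 0 <= (A *m x) i 0.

Definition is_PDD m (A : 'M[R]_(m, d)) (Rs : seq 'cV[R]_d) : Prop :=
  forall r, r \in Rs -> feasible A r.

Definition inc_sub m (A : 'M[R]_(m, d)) (x y : 'cV[R]_d) : Prop :=
  forall k : 'I_m, (A *m x) k 0 = 0 -> (A *m y) k 0 = 0.

Definition A_irredundant m (A : 'M[R]_(m, d)) (s : seq 'cV[R]_d) : Prop :=
  forall i j, (i < size s)%N -> (j < size s)%N -> i <> j ->
    ~ inc_sub A (nth 0 s i) (nth 0 s j).

Definition rem_at (i : nat) (s : seq 'cV[R]_d) := take i s ++ drop i.+1 s.

Inductive make_irred m (A : 'M[R]_(m, d)) : seq 'cV[R]_d -> seq 'cV[R]_d -> Prop :=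
| mi_done s : A_irredundant A s -> make_irred A s s
| mi_step s i j s' : (i < size s)%N -> (j < size s)%N -> i <> j ->
    inc_sub A (nth 0 s i) (nth 0 s j) ->
    make_irred A (rem_at i s) s' -> make_irred A s s'.

Variable mq : nat.
Variable Aq : 'M[R]_(mq, d).

Definition is_minus (r : 'cV[R]_d) : bool := [exists j, (Aq *m r) j 0 < 0].
Definition is_plus (r : 'cV[R]_d) : bool := [forall j, 0 < (Aq *m r) j 0].

(* Ray shooting from rp (Aq rp > 0) towards rm: the first point
   rp + t (rm - rp), t in [0,1], lying on a hyperplane  a~ x = 0  of a row of Aq.
   Only rows with a~ rm < 0 are crossed; they are crossed at
   t = a~ rp / (a~ rp - a~ rm). *)
Definition shoot_t (rp rm : 'cV[R]_d) : R :=
  \big[Num.min/1]_(j | (Aq *m rm) j 0 < 0)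
     ((Aq *m rp) j 0 / ((Aq *m rp) j 0 - (Aq *m rm) j 0)).

Definition shoot (rp rm : 'cV[R]_d) : 'cV[R]_d :=
  rp + shoot_t rp rm *: (rm - rp).

Definition batch_candidates (Rp : seq 'cV[R]_d) : seq 'cV[R]_d :=
  let Rminus := [seq r <- Rp | is_minus r] in
  let Rplus := [seq r <- Rp | is_plus r] in
  let R0 := [seq r <- Rp | ~~ is_minus r && ~~ is_plus r] in
  let Rstar := [seq shoot rp rm | rp <- Rplus, rm <- Rminus] in
  R0 ++ Rplus ++ Rstar.

End PDD.

Definition batch_intersection (R : realFieldType) (d mp mq : nat)
  (Ap : 'M[R]_(mp, d)) (Rp : seq 'cV[R]_d) (Aq : 'M[R]_(mq, d))
  (A' : 'M[R]_(mp + mq, d)) (Rp' : seq 'cV[R]_d) : Prop :=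
  A' = col_mx Ap Aq /\ make_irred A' (batch_candidates Aq Rp) Rp'.

(* Rays of R_0 and R_+ satisfy Aq by their sign pattern.  A
   ray-shot point rp + t (rm - rp) is a convex combination of two rays of the
   PDD, hence satisfies Ap; it satisfies Aq because t does not exceed the
   first crossing parameter of any row that rm violates.  Feasible sets are
   convex cones, so every nonnegative combination of output rays is
   feasible. *)

From HB Require Import structures.
From mathcomp Require Import all_boot all_order all_algebra.
From mathcomp Require Import ring.
Set Implicit Arguments. Unset Strict Implicit. Unset Printing Implicit Defensive.
Import Order.TTheory GRing.Theory Num.Theory.
Local Open Scope ring_scope.

Section Feasibility.
Variables (R : realFieldType) (d : nat).

Lemma feasible_col_mx m n (A : 'M[R]_(m, d)) (B : 'M[R]_(n, d)) x :
  feasible (col_mx A B) x <-> feasible A x /\ feasible B x.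
Proof.
rewrite /feasible mul_col_mx; split.
  move=> hAB; split=> i.
    by move: (hAB (lshift n i)); rewrite col_mxEu.
  by move: (hAB (rshift m i)); rewrite col_mxEd.
by case=> hA hB i; rewrite -[i]splitK; case: (split i) => j /=;
  rewrite (col_mxEu, col_mxEd).
Qed.

Lemma feasible_conic m (A : 'M[R]_(m, d)) n (lam : 'I_n -> R)
    (v : 'I_n -> 'cV[R]_d) :
  (forall i, 0 <= lam i) -> (forall i, feasible A (v i)) ->
  feasible A (\sum_i lam i *: v i).
Proof.
move=> lam_ge0 v_feas k; rewrite mulmx_sumr summxE; apply: sumr_ge0 => i _.
by rewrite -scalemxAr mxE mulr_ge0 ?v_feas.
Qed.

Lemma mulmx_segment m (A : 'M[R]_(m, d)) (x y : 'cV[R]_d) t i :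
  (A *m (x + t *: (y - x))) i 0 = (1 - t) * (A *m x) i 0 + t * (A *m y) i 0.
Proof. by rewrite mulmxDr -scalemxAr mulmxDr mulmxN !mxE; ring. Qed.

Lemma feasible_segment m (A : 'M[R]_(m, d)) (x y : 'cV[R]_d) t :
  0 <= t <= 1 -> feasible A x -> feasible A y -> feasible A (x + t *: (y - x)).
Proof.
case/andP=> t_ge0 t_le1 hx hy i; rewrite mulmx_segment.
by rewrite addr_ge0 // mulr_ge0 ?subr_ge0.
Qed.

Lemma make_irred_subset m (A : 'M[R]_(m, d)) s s' :
  make_irred A s s' -> {subset s' <= s}.
Proof.
elim=> [{}s _ r //|{}s i j {}s' _ _ _ _ _ IH r /IH].
by rewrite /rem_at mem_cat => /orP[/mem_take|/mem_drop].
Qed.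

End Feasibility.

Section RayShooting.
Variables (R : realFieldType) (d mq : nat) (Aq : 'M[R]_(mq, d)).

Lemma feasible_not_minus (r : 'cV[R]_d) : ~~ is_minus Aq r -> feasible Aq r.
Proof.
move=> r_not_minus j; rewrite leNgt; apply: contra r_not_minus => hj.
by apply/existsP; exists j.
Qed.

Lemma feasible_plus (r : 'cV[R]_d) : is_plus Aq r -> feasible Aq r.
Proof. by move=> /forallP r_plus j; apply: ltW. Qed.

Variables (rp rm : 'cV[R]_d).
Hypothesis rp_plus : is_plus Aq rp.

Lemma crossing_gap_gt0 j :
  (Aq *m rm) j 0 < 0 -> 0 < (Aq *m rp) j 0 - (Aq *m rm) j 0.
Proof. by move=> hj; rewrite subr_gt0 (lt_trans hj) // (forallP rp_plus). Qed.

Lemma shoot_t_ge0 : 0 <= shoot_t Aq rp rm.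
Proof.
rewrite /shoot_t; apply: (big_ind (fun t => 0 <= t)) => // [t u|j hj].
  by rewrite le_min => ->.
by rewrite divr_ge0 ?ltW ?crossing_gap_gt0 ?(forallP rp_plus).
Qed.

Lemma shoot_t_le1 : shoot_t Aq rp rm <= 1.
Proof.
rewrite /shoot_t; elim/big_rec: _ => // j t _ t_le1.
by rewrite ge_min t_le1 orbT.
Qed.

Lemma shoot_t_le_crossing j : (Aq *m rm) j 0 < 0 ->
  shoot_t Aq rp rm <= (Aq *m rp) j 0 / ((Aq *m rp) j 0 - (Aq *m rm) j 0).
Proof. by move=> hj; rewrite /shoot_t (bigD1 j) //= ge_min lexx. Qed.

Lemma feasible_shoot : feasible Aq (shoot Aq rp rm).
Proof.
have t_ge0 := shoot_t_ge0; have t_le1 := shoot_t_le1.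
move=> k; rewrite mulmx_segment.
have a_gt0 : 0 < (Aq *m rp) k 0 by apply: (forallP rp_plus).
case: (ltP ((Aq *m rm) k 0) 0) => [b_lt0 | b_ge0].
  have := shoot_t_le_crossing b_lt0.
  rewrite ler_pdivlMr ?crossing_gap_gt0 //.
  set t := shoot_t _ _ _; set a := (Aq *m rp) k 0; set b := (Aq *m rm) k 0.
  have -> : (1 - t) * a + t * b = a - t * (a - b) by ring.
  by rewrite subr_ge0.
by rewrite addr_ge0 // mulr_ge0 ?subr_ge0 // ltW.
Qed.

End RayShooting.

Lemma batch_candidates_feasible (R : realFieldType) (d mp mq : nat)
    (Ap : 'M[R]_(mp, d)) (Rp : seq 'cV[R]_d) (Aq : 'M[R]_(mq, d)) r :
  is_PDD Ap Rp -> r \in batch_candidates Aq Rp -> feasible Ap r /\ feasible Aq r.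
Proof.
move=> Rp_feas; rewrite /batch_candidates !mem_cat => /or3P[].
- rewrite mem_filter => /andP[/andP[r_not_minus _] r_in].
  by split; [exact: Rp_feas | exact: feasible_not_minus].
- rewrite mem_filter => /andP[r_plus r_in].
  by split; [exact: Rp_feas | exact: feasible_plus].
case/allpairsP=> [[rp rm]] /= [].
rewrite !mem_filter => /andP[rp_plus rp_in] /andP[_ rm_in] ->.
split; last exact: feasible_shoot.
by apply: feasible_segment; [rewrite shoot_t_ge0 ?shoot_t_le1 | exact: Rp_feas..].
Qed.

Theorem lemma4p1 (R : realFieldType) (d mp mq : nat)
  (Ap : 'M[R]_(mp, d)) (Rp : seq 'cV[R]_d) (Aq : 'M[R]_(mq, d))
  (A' : 'M[R]_(mp + mq, d)) (Rp' : seq 'cV[R]_d) :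
  is_PDD Ap Rp ->
  batch_intersection Ap Rp Aq A' Rp' ->
  (forall x : 'cV[R]_d, feasible A' x <-> (feasible Ap x /\ feasible Aq x)) /\
  (forall lam : 'I_(size Rp') -> R,
     (forall i, 0 <= lam i) -> \sum_i lam i <= 1 ->
     let x := \sum_i lam i *: nth 0 Rp' i in
     feasible Ap x /\ feasible Aq x).
Proof.
move=> Rp_feas [-> Rp'_irred]; split=> [x|]; first exact: feasible_col_mx.
move=> lam lam_ge0 _ /=.
have Rp'_feas (i : 'I_(size Rp')) :
    feasible Ap (nth 0 Rp' i) /\ feasible Aq (nth 0 Rp' i).
  apply: batch_candidates_feasible Rp_feas _.
  exact: (make_irred_subset Rp'_irred) (mem_nth 0 (ltn_ord i)).
by split; apply: feasible_conic => // i; case: (Rp'_feas i).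
Qed.
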